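(* Let $f \in \mathrm{Inj}(\Omega)$ satisfy $(f)\mathrm{C}_{\mathrm{open}} + (f)\mathrm{C}_{\mathrm{fwd}} = 1$ and $(f)\mathrm{C}_n < \aleph_0$ for all $n \in \mathbb{Z}_+$, and let $h \in \mathrm{Fin}(\Omega)$ be a transposition. Then $$\sum_{n \in \mathbb{Z}_+} ((f)\mathrm{C}_n - (fh)\mathrm{C}_n) = \sum_{n \in \mathbb{Z}_+} ((f)\mathrm{C}_n - (hf)\mathrm{C}_n) \in \{-1,1\}$$ (only finitely many terms of each sum are nonzero).
   Context: $\Omega$ is a countably infinite set; maps are written on the right and composed left to right. $\mathrm{Inj}(\Omega)$ is the monoid of injective maps $\Omega\to\Omega$; $\mathrm{Fin}(\Omega)$ the permutations moving only finitely many points; a transposition swaps two distinct points and fixes all others. For $f\in\mathrm{Inj}(\Omega)$, a cycle of $f$ is a nonempty $\Sigma\subseteq\Omega$ such that (a) for all $\alpha\in\Omega$, $(\alpha)f\in\Sigma$ iff $\alpha\in\Sigma$, and (b) no proper nonempty subset of $\Sigma$ satisfies (a). A forward cycle is an infinite cycle $\Sigma$ with $\Sigma\setminus(\Omega)f\ne\emptyset$; an open cycle is an infinite cycle that is not forward. $(f)\mathrm{C}_n$ ($n\in\mathbb{Z}_+$) is the cardinal number of cycles of cardinality $n$; $(f)\mathrm{C}_{\mathrm{open}}$, $(f)\mathrm{C}_{\mathrm{fwd}}$ the numbers of open and forward cycles. *)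

From Stdlib Require Import ZArith List Arith.
Import ListNotations.

Section D.
Context {T : Type}.

Definition injective (f : T -> T) : Prop := forall x y, f x = f y -> x = y.

Definition countably_infinite (U : Type) : Prop :=
  exists e : nat -> U, (forall m n, e m = e n -> m = n) /\ (forall x, exists n, e n = x).

Definition same_set (A B : T -> Prop) : Prop := forall x, A x <-> B x.

Definition invariant (f : T -> T) (S : T -> Prop) : Prop :=
  forall a, S (f a) <-> S a.

Definition is_cycle (f : T -> T) (S : T -> Prop) : Prop :=
  (exists x, S x) /\ invariant f S /\
  forall S' : T -> Prop,
    (forall x, S' x -> S x) -> (exists x, S' x) -> (exists x, S x /\ ~ S' x) ->
    ~ invariant f S'.

Definition has_size (S : T -> Prop) (n : nat) : Prop :=
  exists l : list T, NoDup l /\ length l = n /\ forall x, S x <-> In x l.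

Definition infinite_set (S : T -> Prop) : Prop := forall n, ~ has_size S n.

Definition not_in_image (f : T -> T) (S : T -> Prop) : Prop :=
  exists x, S x /\ forall y, f y <> x.

Definition forward_cycle (f : T -> T) (S : T -> Prop) : Prop :=
  is_cycle f S /\ infinite_set S /\ not_in_image f S.

Definition open_cycle (f : T -> T) (S : T -> Prop) : Prop :=
  is_cycle f S /\ infinite_set S /\ ~ not_in_image f S.

Definition family_card (P : (T -> Prop) -> Prop) (k : nat) : Prop :=
  exists l : list (T -> Prop),
    length l = k /\
    (forall S, In S l -> P S) /\
    (forall S, P S -> exists S', In S' l /\ same_set S S') /\
    (forall i j, i < j -> j < k ->
       ~ same_set (nth i l (fun _ => False)) (nth j l (fun _ => False))).

Definition Cn (f : T -> T) (n k : nat) : Prop :=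
  family_card (fun S => is_cycle f S /\ has_size S n) k.

Definition Copen (f : T -> T) (k : nat) : Prop := family_card (open_cycle f) k.
Definition Cfwd (f : T -> T) (k : nat) : Prop := family_card (forward_cycle f) k.

Definition transposition (h : T -> T) : Prop :=
  exists a b, a <> b /\ h a = b /\ h b = a /\ forall x, x <> a -> x <> b -> h x = x.

(* maps written on the right, composed left to right: (x)(fg) = ((x)f)g *)
Definition comp_lr (f g : T -> T) : T -> T := fun x => g (f x).

End D.

Fixpoint zdiff_sum (a b : nat -> nat) (N : nat) : Z :=
  match N with
  | O => 0%Z
  | S m => (zdiff_sum a b m + (Z.of_nat (a (S m)) - Z.of_nat (b (S m))))%Z
  end.

(* Let h = (a b).  A cycle of f containing neither a nor b is also a cycle of fh, and
   conversely, so for each n the difference (f)C_n - (fh)C_n only involves cycles through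
   a or b, and summing over n gives the change in the number of finite cycles through a
   or b.  Composing with h either splits the cycle through a and b into two or joins the
   cycles through a and b into one.  Splitting a finite cycle or joining two finite ones
   changes that number by one, and joining a finite cycle with an infinite one destroys
   one finite cycle.  If neither a nor b lies on a finite cycle, the hypothesis that f has
   exactly one infinite cycle puts both on it, say b = (a)f^d, and fh cuts off the finite
   cycle of a, ..., (a)f^(d-1).  Finally hf = h(fh)h is conjugate to fh, so both maps
   have the same cycle counts. *)

From Stdlib Require Import ZArith List Arith Lia Wf_nat Classical ClassicalEpsilon.
Import ListNotations.

Section Cycles.
Context {T : Type}.
Implicit Types (g : T -> T) (x y z : T) (A B C : T -> Prop).

Definition cycle_of g x : T -> Prop :=
  fun y => exists i j, Nat.iter i g x = Nat.iter j g y.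

Lemma cycle_of_refl g x : cycle_of g x x.
Proof. now exists 0, 0. Qed.

Lemma cycle_of_sym g x y : cycle_of g x y -> cycle_of g y x.
Proof. intros [i [j E]]. now exists j, i. Qed.

Lemma cycle_of_trans g x y z : cycle_of g x y -> cycle_of g y z -> cycle_of g x z.
Proof.
  intros [i [j E]] [k [l F]]. exists (k + i), (j + l).
  rewrite !Nat.iter_add, E, <- !Nat.iter_add, (Nat.add_comm k j), Nat.iter_add, F.
  now rewrite <- Nat.iter_add.
Qed.

Lemma cycle_of_iter g x k : cycle_of g x (Nat.iter k g x).
Proof. now exists k, 0. Qed.

Lemma cycle_of_step g x y : cycle_of g x (g y) <-> cycle_of g x y.
Proof.
  split; intros [i [j E]].
  - exists i, (S j). now rewrite E, Nat.iter_succ_r.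
  - exists (S i), j. now rewrite Nat.iter_succ, E, <- Nat.iter_succ, Nat.iter_succ_r.
Qed.

Lemma cycle_of_eq g x y : cycle_of g x y -> same_set (cycle_of g x) (cycle_of g y).
Proof.
  intros Hxy z. split; intros H.
  - exact (cycle_of_trans _ _ _ _ (cycle_of_sym _ _ _ Hxy) H).
  - exact (cycle_of_trans _ _ _ _ Hxy H).
Qed.

Lemma invariant_iter g C k x : invariant g C -> (C (Nat.iter k g x) <-> C x).
Proof.
  intros HC. induction k as [|k IH]; [reflexivity|].
  rewrite Nat.iter_succ, (HC _). exact IH.
Qed.

Lemma invariant_cycle_of g C x y : invariant g C -> C x -> cycle_of g x y -> C y.
Proof.
  intros HC Hx [i [j E]]. apply (invariant_iter g C j y HC).
  rewrite <- E. now apply invariant_iter.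
Qed.

Lemma is_cycle_iff g C : is_cycle g C <-> exists x, same_set C (cycle_of g x).
Proof.
  split.
  - intros [[x Hx] [HC Hmin]]. exists x. intros y. split.
    + intros Hy. apply NNPP. intros Hn. apply (Hmin (cycle_of g x)).
      * intros z. now apply invariant_cycle_of.
      * exists x. apply cycle_of_refl.
      * now exists y.
      * intros w. apply cycle_of_step.
    + now apply invariant_cycle_of.
  - intros [x Hx]. split; [|split].
    + exists x. apply Hx, cycle_of_refl.
    + intros w. rewrite (Hx (g w)), (Hx w). apply cycle_of_step.
    + intros C' Hsub [y Hy] [z [Hz Hnz]] HC'. apply Hnz.
      apply (invariant_cycle_of g C' y z HC' Hy).
      apply (cycle_of_trans _ _ x); [apply cycle_of_sym|]; apply Hx; auto.
Qed.

Lemma is_cycle_cycle_of g x : is_cycle g (cycle_of g x).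
Proof. apply is_cycle_iff. now exists x. Qed.

Lemma is_cycle_at g C x : is_cycle g C -> C x -> same_set C (cycle_of g x).
Proof.
  intros HC Hx. apply is_cycle_iff in HC as [y Hy]. intros z.
  rewrite (Hy z). apply cycle_of_eq, Hy, Hx.
Qed.

Lemma is_cycle_agree f g C :
  is_cycle f C -> (forall z, C z -> g z = f z) -> invariant g C -> is_cycle g C.
Proof.
  intros HC Hfg Hinv. pose proof (proj1 (proj2 HC)) as HfC.
  apply is_cycle_iff in HC as [x Hx]. apply is_cycle_iff. exists x.
  assert (Hiter : forall y k, C y -> Nat.iter k g y = Nat.iter k f y).
  { intros y k Hy. induction k as [|k IH]; [reflexivity|].
    rewrite !Nat.iter_succ, IH. apply Hfg, (invariant_iter f C k y HfC), Hy. }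
  intros y. split.
  - intros Hy. destruct (proj1 (Hx y) Hy) as [i [j E]]. exists i, j.
    rewrite !Hiter; auto. apply Hx, cycle_of_refl.
  - intros Hy. apply (invariant_cycle_of g C x); auto. apply Hx, cycle_of_refl.
Qed.

Lemma has_size_ext A B n : same_set A B -> has_size A n -> has_size B n.
Proof.
  intros E [l [Hl [Hn Hm]]]. exists l. repeat split; auto.
  - intros Hx. now apply Hm, E.
  - intros Hx. now apply E, Hm.
Qed.

Lemma has_size_unique A n m : has_size A n -> has_size A m -> n = m.
Proof.
  intros [l [Hl [<- Hm]]] [l' [Hl' [<- Hm']]].
  apply Nat.le_antisymm; apply NoDup_incl_length; auto;
    intros x Hx; [apply Hm', Hm | apply Hm, Hm']; exact Hx.
Qed.

Lemma has_size_pos A x n : A x -> has_size A n -> 1 <= n.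
Proof.
  intros Hx [[|y l] [_ [<- Hm]]]; [|simpl; lia]. now apply Hm in Hx.
Qed.

Lemma iter_inj g n x y : injective g -> Nat.iter n g x = Nat.iter n g y -> x = y.
Proof. intros Hg. induction n as [|n IH]; [auto|]. rewrite !Nat.iter_succ. auto. Qed.

Lemma iter_sub_fixed g m n x :
  injective g -> m <= n -> Nat.iter m g x = Nat.iter n g x -> Nat.iter (n - m) g x = x.
Proof.
  intros Hg Hmn E. replace n with (m + (n - m)) in E by lia.
  rewrite Nat.iter_add in E. symmetry. exact (iter_inj g m _ _ Hg E).
Qed.

Definition periodic g x : Prop := exists m, 1 <= m /\ Nat.iter m g x = x.

Definition least_period g x p : Prop :=
  1 <= p /\ Nat.iter p g x = x /\ forall m, 1 <= m -> m < p -> Nat.iter m g x <> x.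

Lemma least_period_exists g x : periodic g x -> exists p, least_period g x p.
Proof.
  intros Hx.
  destruct (dec_inh_nat_subset_has_unique_least_element
              (fun m => 1 <= m /\ Nat.iter m g x = x) (fun m => classic _) Hx)
    as [p [[[Hp Hpx] Hmin] _]].
  exists p. repeat split; auto. intros m Hm Hmp E. specialize (Hmin m (conj Hm E)). lia.
Qed.

Lemma iter_mul_period g p x c : Nat.iter p g x = x -> Nat.iter (c * p) g x = x.
Proof.
  intros Hx. induction c as [|c IH]; [reflexivity|].
  now rewrite Nat.mul_succ_l, Nat.iter_add, Hx.
Qed.

Lemma iter_mod_period g p x e :
  Nat.iter p g x = x -> Nat.iter e g x = Nat.iter (e mod p) g x.
Proof.
  intros Hx. transitivity (Nat.iter (e mod p + e / p * p) g x).
  - f_equal. pose proof (Nat.div_mod_eq e p). lia.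
  - now rewrite Nat.iter_add, iter_mul_period.
Qed.

Lemma cycle_of_periodic g p x y :
  injective g -> 1 <= p -> Nat.iter p g x = x -> cycle_of g x y ->
  exists k, k < p /\ y = Nat.iter k g x.
Proof.
  intros Hg Hp Hx [i [j E]]. exists ((i + j * p - j) mod p).
  split; [apply Nat.mod_upper_bound; lia|].
  rewrite <- iter_mod_period by auto. apply (iter_inj g j); auto.
  rewrite <- Nat.iter_add. replace (j + (i + j * p - j)) with (i + j * p) by nia.
  now rewrite Nat.iter_add, iter_mul_period, E.
Qed.

Lemma periodic_cycle_of g x y : injective g -> periodic g x -> cycle_of g x y -> periodic g y.
Proof.
  intros Hg [p [Hp Hx]] Hxy. destruct (cycle_of_periodic g p x y Hg Hp Hx Hxy) as [k [_ ->]].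
  exists p. split; auto. now rewrite <- Nat.iter_add, Nat.add_comm, Nat.iter_add, Hx.
Qed.

Lemma iter_eq_below g p x m n :
  injective g -> (forall k, 1 <= k -> k < p -> Nat.iter k g x <> x) ->
  m < p -> n < p -> Nat.iter m g x = Nat.iter n g x -> m = n.
Proof.
  intros Hg Hmin Hm Hn E.
  destruct (Nat.lt_total m n) as [Hmn|[Hmn|Hmn]]; auto; exfalso.
  - apply (Hmin (n - m)); [lia|lia|]. now apply iter_sub_fixed; [|lia|].
  - apply (Hmin (m - n)); [lia|lia|]. now apply iter_sub_fixed; [|lia|].
Qed.

Lemma iter_eq_aperiodic g x m n :
  injective g -> ~ periodic g x -> Nat.iter m g x = Nat.iter n g x -> m = n.
Proof.
  intros Hg Hx. apply (iter_eq_below g (S (m + n))); auto; try lia.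
  intros k Hk _ E. apply Hx. now exists k.
Qed.

Lemma NoDup_orbit g p x :
  injective g -> (forall k, 1 <= k -> k < p -> Nat.iter k g x <> x) ->
  NoDup (map (fun i => Nat.iter i g x) (seq 0 p)).
Proof.
  intros Hg Hmin. apply NoDup_map_NoDup_ForallPairs; [|apply seq_NoDup].
  intros i j Hi Hj. apply in_seq in Hi, Hj. apply (iter_eq_below g p); auto; lia.
Qed.

Lemma has_size_least_period g x p :
  injective g -> least_period g x p -> has_size (cycle_of g x) p.
Proof.
  intros Hg [Hp [Hx Hmin]]. exists (map (fun i => Nat.iter i g x) (seq 0 p)).
  split; [now apply NoDup_orbit|]. split; [now rewrite length_map, length_seq|].
  intros y. rewrite in_map_iff. split.
  - intros Hy. destruct (cycle_of_periodic g p x y Hg Hp Hx Hy) as [k [Hk ->]].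
    exists k. split; auto. apply in_seq. lia.
  - intros [k [<- _]]. apply cycle_of_iter.
Qed.

Lemma periodic_of_has_size g x n :
  injective g -> has_size (cycle_of g x) n -> periodic g x.
Proof.
  intros Hg [l [Hl [<- Hm]]]. apply NNPP. intros Hx.
  assert (Hle : length (map (fun i => Nat.iter i g x) (seq 0 (S (length l)))) <= length l).
  { apply NoDup_incl_length.
    - apply NoDup_orbit; auto. intros m Hm1 _ E. apply Hx. now exists m.
    - intros y Hy. apply in_map_iff in Hy as [k [<- _]]. apply Hm, cycle_of_iter. }
  rewrite length_map, length_seq in Hle. lia.
Qed.

Lemma finite_cycle_of_iff g x :
  injective g -> (exists n, has_size (cycle_of g x) n) <-> periodic g x.
Proof.
  intros Hg. split.
  - intros [n Hn]. exact (periodic_of_has_size g x n Hg Hn).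
  - intros Hx. destruct (least_period_exists g x Hx) as [p Hp].
    exists p. now apply has_size_least_period.
Qed.

End Cycles.

Section Families.
Context {T : Type}.
Implicit Types (A B : T -> Prop) (P Q D : (T -> Prop) -> Prop) (l : list (T -> Prop)).

Lemma same_set_sym A B : same_set A B -> same_set B A.
Proof. intros E x. now rewrite (E x). Qed.

Lemma same_set_trans A B C : same_set A B -> same_set B C -> same_set A C.
Proof. intros E F x. now rewrite (E x). Qed.

Definition distinct_sets l : Prop := ForallOrdPairs (fun A B => ~ same_set A B) l.

Definition enumerates P l : Prop :=
  (forall A, In A l -> P A) /\ (forall A, P A -> exists B, In B l /\ same_set A B) /\
  distinct_sets l.

Lemma distinct_sets_nth l :
  distinct_sets l <-> forall i j, i < j -> j < length l ->
    ~ same_set (nth i l (fun _ => False)) (nth j l (fun _ => False)).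
Proof.
  induction l as [|A l IH]; split.
  - simpl. lia.
  - constructor.
  - intros Hl. inversion Hl as [|? ? HA Hd]; subst. intros [|i] [|j] Hij Hj; simpl in *; try lia.
    + apply (proj1 (Forall_forall _ l) HA), nth_In. lia.
    + apply IH; auto; lia.
  - intros H. constructor.
    + apply Forall_forall. intros B HB. destruct (In_nth l B (fun _ => False) HB) as [n [Hn <-]].
      apply (H 0 (S n)); simpl; lia.
    + apply IH. intros i j Hij Hj. apply (H (S i) (S j)); simpl; lia.
Qed.

Lemma family_card_iff P k : family_card P k <-> exists l, length l = k /\ enumerates P l.
Proof.
  split.
  - intros [l [<- [H1 [H2 H3]]]]. exists l. repeat split; auto. now apply distinct_sets_nth.
  - intros [l [<- [H1 [H2 H3]]]]. exists l. repeat split; auto. now apply distinct_sets_nth.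
Qed.

Lemma distinct_sets_length_le l1 l2 :
  distinct_sets l1 -> (forall A, In A l1 -> exists B, In B l2 /\ same_set A B) ->
  length l1 <= length l2.
Proof.
  revert l2. induction l1 as [|A l1 IH]; intros l2 Hd H; simpl; [lia|].
  inversion Hd as [|? ? HA Hd1]; subst.
  destruct (H A (or_introl eq_refl)) as [B [HB EAB]].
  destruct (in_split B l2 HB) as [u [v ->]].
  assert (length l1 <= length (u ++ v)); [|rewrite length_app in *; simpl; lia].
  apply IH; auto. intros X HX. destruct (H X (or_intror HX)) as [Y [HY EXY]].
  exists Y. split; auto. apply in_app_or in HY as [HY|[<-|HY]]; try (apply in_or_app; auto).
  exfalso. apply (proj1 (Forall_forall _ l1) HA X HX).
  exact (same_set_trans _ _ _ EAB (same_set_sym _ _ EXY)).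
Qed.

Lemma family_card_unique P k1 k2 : family_card P k1 -> family_card P k2 -> k1 = k2.
Proof.
  rewrite !family_card_iff. intros [l1 [<- [F1 [F2 F3]]]] [l2 [<- [G1 [G2 G3]]]].
  apply Nat.le_antisymm; apply distinct_sets_length_le; auto.
Qed.

Lemma family_card_ext P Q k : (forall A, P A <-> Q A) -> family_card P k -> family_card Q k.
Proof.
  intros E [l [Hl [H1 [H2 H3]]]]. exists l. repeat split; auto.
  - intros A HA. now apply E, H1.
  - intros A HA. now apply H2, E.
Qed.

Lemma family_card_empty P : (forall A, ~ P A) -> family_card P 0.
Proof.
  intros H. exists []. split; [reflexivity|]. split; [intros A []|].
  split; [intros A HA; now destruct (H A HA)|]. simpl. lia.
Qed.

Lemma family_card_0 P A : family_card P 0 -> ~ P A.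
Proof.
  intros [[|B l] [Hl [_ [H2 _]]]] HA; [|discriminate].
  now destruct (H2 A HA) as [B [[] _]].
Qed.

Lemma family_card_single P A : P A -> (forall B, P B -> same_set B A) -> family_card P 1.
Proof.
  intros HA H. exists [A]. repeat split; simpl; try lia.
  - now intros B [<-|[]].
  - intros B HB. exists A. auto.
Qed.

Lemma family_card_1 P A B : family_card P 1 -> P A -> P B -> same_set A B.
Proof.
  intros [[|X [|Y l]] [Hl [_ [H2 _]]]] HA HB; try discriminate.
  destruct (H2 A HA) as [Y [[<-|[]] E1]], (H2 B HB) as [Z [[<-|[]] E2]].
  exact (same_set_trans _ _ _ E1 (same_set_sym _ _ E2)).
Qed.

Lemma distinct_sets_app l1 l2 :
  distinct_sets l1 -> distinct_sets l2 ->
  (forall A B, In A l1 -> In B l2 -> ~ same_set A B) -> distinct_sets (l1 ++ l2).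
Proof.
  induction l1 as [|A l1 IH]; intros H1 H2 H; simpl; auto.
  inversion H1 as [|? ? HA Hd]; subst. constructor.
  - apply Forall_app. split; auto. apply Forall_forall. intros B HB. apply H; simpl; auto.
  - apply IH; auto. intros X Y HX HY. apply H; simpl; auto.
Qed.

Lemma family_card_union P Q k1 k2 :
  (forall A B, P A -> Q B -> ~ same_set A B) -> family_card P k1 -> family_card Q k2 ->
  family_card (fun A => P A \/ Q A) (k1 + k2).
Proof.
  intros Hd. rewrite !family_card_iff. intros [l1 [<- [F1 [F2 F3]]]] [l2 [<- [G1 [G2 G3]]]].
  exists (l1 ++ l2). split; [apply length_app|]. split; [|split].
  - intros A HA. apply in_app_or in HA as [HA|HA]; auto.
  - intros A [HA|HA]; [destruct (F2 A HA) as [B [? ?]]|destruct (G2 A HA) as [B [? ?]]];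
      exists B; split; auto; apply in_or_app; auto.
  - apply distinct_sets_app; auto.
Qed.

Lemma partition_distinct_sets D l :
  distinct_sets l -> exists l1 l2, length l1 + length l2 = length l /\
    (forall A, In A l1 <-> In A l /\ D A) /\ (forall A, In A l2 <-> In A l /\ ~ D A) /\
    distinct_sets l1 /\ distinct_sets l2.
Proof.
  induction l as [|A l IH]; intros Hl.
  - exists [], []. simpl. repeat split; tauto.
  - inversion Hl as [|? ? HA Hd]; subst.
    destruct (IH Hd) as [l1 [l2 [Hlen [H1 [H2 [D1 D2]]]]]].
    assert (Hsub : forall l', (forall B, In B l' -> In B l) -> Forall (fun B => ~ same_set A B) l').
    { intros l' Hl'. apply Forall_forall. intros B HB.
      apply (proj1 (Forall_forall _ l) HA), Hl', HB. }
    destruct (classic (D A)) as [HDA|HDA].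
    + exists (A :: l1), l2. simpl. split; [lia|split; [|split; [|split]]]; auto.
      * intros B. rewrite H1. intuition congruence.
      * intros B. rewrite H2. intuition congruence.
      * constructor; auto. apply Hsub. intros B HB. now apply H1.
    + exists l1, (A :: l2). simpl. split; [lia|split; [|split; [|split]]]; auto.
      * intros B. rewrite H1. intuition congruence.
      * intros B. rewrite H2. intuition congruence.
      * constructor; auto. apply Hsub. intros B HB. now apply H2.
Qed.

Lemma family_card_split P D k :
  (forall A B, same_set A B -> D A -> D B) -> family_card P k ->
  exists k1 k2, k = k1 + k2 /\
    family_card (fun A => P A /\ D A) k1 /\ family_card (fun A => P A /\ ~ D A) k2.
Proof.
  intros HD. rewrite family_card_iff. intros [l [<- [F1 [F2 F3]]]].
  destruct (partition_distinct_sets D l F3) as [l1 [l2 [Hlen [H1 [H2 [D1 D2]]]]]].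
  exists (length l1), (length l2). split; [lia|]. rewrite !family_card_iff. split.
  - exists l1. split; [reflexivity|split; [|split]]; auto.
    + intros A HA. now apply H1 in HA as [HA' HDA]; auto.
    + intros A [HA HDA]. destruct (F2 A HA) as [B [HB E]]. exists B. split; auto.
      apply H1. split; auto. exact (HD A B E HDA).
  - exists l2. split; [reflexivity|split; [|split]]; auto.
    + intros A HA. now apply H2 in HA as [HA' HDA]; auto.
    + intros A [HA HDA]. destruct (F2 A HA) as [B [HB E]]. exists B. split; auto.
      apply H2. split; auto. intros HDB. exact (HDA (HD B A (same_set_sym _ _ E) HDB)).
Qed.

Lemma family_card_preimage (h : T -> T) P Q k :
  (forall x, h (h x) = x) ->
  (forall A, P A -> Q (fun x => A (h x))) -> (forall B, Q B -> P (fun x => B (h x))) ->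
  family_card P k -> family_card Q k.
Proof.
  intros Hh HPQ HQP [l [<- [H1 [H2 H3]]]].
  exists (map (fun A x => A (h x)) l). split; [apply length_map|]. split; [|split].
  - intros B HB. apply in_map_iff in HB as [A [<- HA]]. auto.
  - intros B HB. destruct (H2 _ (HQP B HB)) as [A [HA E]].
    exists (fun x => A (h x)). split; [exact (in_map (fun A (x : T) => A (h x)) l A HA)|].
    intros y. now rewrite <- (E (h y)), Hh.
  - intros i j Hij Hj E.
    assert (Hnth : forall n, nth n (map (fun A x => A (h x)) l) (fun _ => False) =
                             fun x => nth n l (fun _ => False) (h x))
      by (intros n; exact (map_nth (fun A x => A (h x)) l (fun _ => False) n)).
    rewrite !Hnth in E. apply (H3 i j Hij Hj). intros y. rewrite <- (Hh y). apply E.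
Qed.

End Families.

Definition iverson (P : Prop) : nat := if excluded_middle_informative P then 1 else 0.

Lemma iverson_true (P : Prop) : P -> iverson P = 1.
Proof. unfold iverson. now destruct (excluded_middle_informative P). Qed.

Lemma iverson_false (P : Prop) : ~ P -> iverson P = 0.
Proof. unfold iverson. now destruct (excluded_middle_informative P). Qed.

Lemma iverson_iff (P Q : Prop) : (P <-> Q) -> iverson P = iverson Q.
Proof.
  intros E. destruct (classic P).
  - rewrite !iverson_true; tauto.
  - rewrite !iverson_false; tauto.
Qed.

Section CyclesThrough.
Context {T : Type}.
Implicit Types (f g : T -> T) (a b x : T) (A C : T -> Prop).

Definition ncycles_through g a b n : nat :=
  iverson (has_size (cycle_of g a) n) + iverson (has_size (cycle_of g b) n /\ ~ cycle_of g a b).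

Lemma family_card_cycles_at g x n :
  family_card (fun A => (is_cycle g A /\ has_size A n) /\ A x)
              (iverson (has_size (cycle_of g x) n)).
Proof.
  destruct (classic (has_size (cycle_of g x) n)) as [Hn|Hn].
  - rewrite iverson_true by exact Hn. apply (family_card_single _ (cycle_of g x)).
    + split; [split|]; auto using is_cycle_cycle_of, cycle_of_refl.
    + intros A [[HA _] Hx]. now apply is_cycle_at.
  - rewrite iverson_false by exact Hn. apply family_card_empty.
    intros A [[HA HAn] Hx]. apply Hn. exact (has_size_ext _ _ _ (is_cycle_at g A x HA Hx) HAn).
Qed.

Lemma family_card_cycles_through g a b n :
  family_card (fun A => (is_cycle g A /\ has_size A n) /\ (A a \/ A b))
              (ncycles_through g a b n).
Proof.
  unfold ncycles_through. destruct (classic (cycle_of g a b)) as [Hab|Hab].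
  - rewrite (iverson_false (_ /\ _)), Nat.add_0_r by tauto.
    eapply family_card_ext; [|apply (family_card_cycles_at g a n)].
    intros A. split; [tauto|]. intros [[HA HAn] [Ha|Hb]]; split; auto.
    apply (is_cycle_at g A b HA Hb), cycle_of_sym, Hab.
  - rewrite (iverson_iff (_ /\ _) (has_size (cycle_of g b) n)) by tauto.
    apply (family_card_ext (fun A => ((is_cycle g A /\ has_size A n) /\ A a) \/
                                     ((is_cycle g A /\ has_size A n) /\ A b))); [intros A; tauto|].
    apply family_card_union; [|apply family_card_cycles_at..].
    intros A B [[HA _] Ha] [[HB _] Hb] E. apply Hab.
    apply (is_cycle_at g B a HB); auto. now apply E.
Qed.

Lemma Cn_transfer f g a b n k :
  (forall C, ~ C a -> ~ C b -> is_cycle f C -> is_cycle g C) ->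
  (forall C, ~ C a -> ~ C b -> is_cycle g C -> is_cycle f C) ->
  Cn f n k ->
  ncycles_through f a b n <= k /\
  Cn g n (k - ncycles_through f a b n + ncycles_through g a b n).
Proof.
  intros Hfg Hgf Hk.
  assert (Hmeets : forall A B, same_set A B -> A a \/ A b -> B a \/ B b)
    by (intros A B E; now rewrite (E a), (E b)).
  destruct (family_card_split _ _ k Hmeets Hk) as [k1 [k2 [-> [Hk1 Hk2]]]].
  rewrite (family_card_unique _ _ _ Hk1 (family_card_cycles_through f a b n)) in *.
  split; [lia|]. replace (_ + k2 - _ + _) with (ncycles_through g a b n + k2) by lia.
  apply (family_card_ext (fun A => ((is_cycle g A /\ has_size A n) /\ (A a \/ A b)) \/
                                   ((is_cycle f A /\ has_size A n) /\ ~ (A a \/ A b)))).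
  - intros A. split.
    + intros [[[HA Hn] _]|[[HA Hn] HD]]; split; auto; apply Hfg; tauto.
    + intros [HA Hn]. destruct (classic (A a \/ A b)) as [HD|HD]; [left|right];
        (split; [split|]); auto; apply Hgf; tauto.
  - apply family_card_union; [|apply family_card_cycles_through|exact Hk2].
    intros A B [_ HA] [_ HB] E. apply HB. now rewrite <- (E a), <- (E b).
Qed.

End CyclesThrough.

Section Swap.
Context {T : Type}.
Implicit Types (f g h : T -> T) (a b x y : T) (C : T -> Prop).

Definition swaps h a b : Prop :=
  a <> b /\ h a = b /\ h b = a /\ forall x, x <> a -> x <> b -> h x = x.

Lemma swaps_sym h a b : swaps h a b -> swaps h b a.
Proof. intros [Hab [Ha [Hb Hx]]]. repeat split; auto. Qed.

Lemma swaps_involutive h a b x : swaps h a b -> h (h x) = x.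
Proof.
  intros [Hab [Ha [Hb Hx]]].
  destruct (classic (x = a)) as [->|Hxa]; [now rewrite Ha|].
  destruct (classic (x = b)) as [->|Hxb]; [now rewrite Hb|].
  now rewrite !(Hx x Hxa Hxb).
Qed.

Lemma swaps_invariant h a b C : swaps h a b -> ~ C a -> ~ C b -> invariant h C.
Proof.
  intros Hs Ha Hb y. pose proof Hs as [_ [_ [_ Hx]]].
  assert (Hfix : forall z, C z -> h z = z) by (intros z Hz; apply Hx; congruence).
  split; intros Hy.
  - rewrite <- (swaps_involutive h a b y Hs), Hfix; auto.
  - now rewrite Hfix.
Qed.

Lemma is_cycle_swap f g h a b C :
  swaps h a b -> (forall z, g z = h (f z)) -> is_cycle f C -> ~ C a -> ~ C b -> is_cycle g C.
Proof.
  intros Hs Hg HC Ha Hb. apply (is_cycle_agree f); auto.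
  - intros z Hz. rewrite Hg. pose proof Hs as [_ [_ [_ Hx]]].
    assert (Hfz : C (f z)) by now apply (proj1 (proj2 HC)).
    apply Hx; intros E; subst; auto.
  - intros w. rewrite Hg, (swaps_invariant h a b C Hs Ha Hb (f w)). apply HC.
Qed.

Lemma Cn_comp_swap f h a b n k :
  swaps h a b -> Cn f n k ->
  ncycles_through f a b n <= k /\
  Cn (comp_lr f h) n (k - ncycles_through f a b n + ncycles_through (comp_lr f h) a b n).
Proof.
  intros Hs. apply Cn_transfer; intros C Ha Hb HC.
  - now apply (is_cycle_swap f _ h a b).
  - apply (is_cycle_swap (comp_lr f h) _ h a b); auto.
    intros z. unfold comp_lr. now rewrite (swaps_involutive h a b).
Qed.

Section Dynamics.
Variables (f h : T -> T) (a b : T).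
Hypothesis Hf : injective f.
Hypothesis Hs : swaps h a b.
Local Notation g := (comp_lr f h).

Lemma comp_swap_injective : injective g.
Proof.
  intros x y E. apply Hf.
  rewrite <- (swaps_involutive h a b (f x) Hs), <- (swaps_involutive h a b (f y) Hs).
  exact (f_equal h E).
Qed.

Lemma iter_comp_swap_agree x K :
  (forall j, 1 <= j -> j <= K -> Nat.iter j f x <> a /\ Nat.iter j f x <> b) ->
  forall k, k <= K -> Nat.iter k g x = Nat.iter k f x.
Proof.
  pose proof Hs as [_ [_ [_ Hfix]]]. intros Hav k.
  induction k as [|k IH]; intros Hk; [reflexivity|].
  rewrite !Nat.iter_succ, IH by lia. unfold comp_lr. apply Hfix; apply (Hav (S k)); lia.
Qed.

Lemma iter_comp_swap_avoid x :
  (forall j, 1 <= j -> Nat.iter j f x <> a /\ Nat.iter j f x <> b) ->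
  forall k, Nat.iter k g x = Nat.iter k f x.
Proof. intros Hav k. apply (iter_comp_swap_agree x k); auto. Qed.

Lemma iter_comp_swap_hit x p :
  1 <= p -> (forall j, 1 <= j -> j < p -> Nat.iter j f x <> a /\ Nat.iter j f x <> b) ->
  Nat.iter p g x = h (Nat.iter p f x).
Proof.
  intros Hp Hav. destruct p as [|p]; [lia|].
  rewrite !Nat.iter_succ, (iter_comp_swap_agree x p); auto.
  intros j Hj1 Hj2. apply Hav; lia.
Qed.

Lemma swap_absorbs : periodic f a -> ~ periodic f b -> ~ periodic g a /\ ~ periodic g b.
Proof.
  intros Ha Hb. destruct (least_period_exists f a Ha) as [p [Hp [Hpa Hmin]]].
  assert (Hab : ~ cycle_of f a b) by (intros C; exact (Hb (periodic_cycle_of f a b Hf Ha C))).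
  assert (Hgb : ~ periodic g b).
  { assert (Hiter : forall k, Nat.iter k g b = Nat.iter k f b).
    { apply iter_comp_swap_avoid. intros j Hj. split; intros E.
      - apply Hab. now exists 0, j.
      - apply Hb. now exists j. }
    intros [m [Hm E]]. apply Hb. exists m. now rewrite <- Hiter. }
  split; auto. intros Hga. apply Hgb, (periodic_cycle_of g a); auto using comp_swap_injective.
  exists p, 0. rewrite (iter_comp_swap_hit a p Hp), Hpa; [apply Hs|].
  intros j Hj1 Hj2. split; [now apply Hmin|]. intros E. apply Hab. now exists j, 0.
Qed.

Lemma swap_merges :
  periodic f a -> periodic f b -> ~ cycle_of f a b -> periodic g a /\ cycle_of g a b.
Proof.
  intros Ha Hb Hab.
  destruct (least_period_exists f a Ha) as [p [Hp [Hpa Hminp]]].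
  destruct (least_period_exists f b Hb) as [q [Hq [Hqb Hminq]]].
  assert (Hgp : Nat.iter p g a = b).
  { rewrite (iter_comp_swap_hit a p Hp), Hpa; [apply Hs|].
    intros j Hj1 Hj2. split; [now apply Hminp|]. intros E. apply Hab. now exists j, 0. }
  assert (Hgq : Nat.iter q g b = a).
  { rewrite (iter_comp_swap_hit b q Hq), Hqb; [apply Hs|].
    intros j Hj1 Hj2. split; [|now apply Hminq]. intros E. apply Hab. now exists 0, j. }
  split.
  - exists (q + p). split; [lia|]. now rewrite Nat.iter_add, Hgp, Hgq.
  - now exists p, 0.
Qed.

Lemma swap_splits :
  periodic f a -> cycle_of f a b ->
  periodic g a /\ periodic g b /\ ~ cycle_of g a b.
Proof.
  pose proof Hs as [Hab [Ha [Hb _]]]. intros Hpa Hcab.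
  destruct (least_period_exists f a Hpa) as [p [Hp [Hpp Hmin]]].
  destruct (cycle_of_periodic f p a b Hf Hp Hpp Hcab) as [i [Hip Hi]].
  assert (Hi0 : 1 <= i) by (destruct i; [now destruct Hab|lia]).
  assert (Heq : forall m n, m < p -> n < p -> Nat.iter m f a = Nat.iter n f a -> m = n)
    by (intros m n; apply (iter_eq_below f p a m n Hf Hmin)).
  assert (Hbefore : forall j, 1 <= j -> j < i -> Nat.iter j f a <> a /\ Nat.iter j f a <> b).
  { intros j Hj1 Hj2. split; [apply Hmin; lia|]. rewrite Hi. intros E. apply Heq in E; lia. }
  assert (Hgi : Nat.iter i g a = a) by (now rewrite (iter_comp_swap_hit a i), <- Hi).
  assert (Hgb : Nat.iter (p - i) g b = b).
  { rewrite (iter_comp_swap_hit b (p - i)); [|lia|].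
    - replace (Nat.iter (p - i) f b) with a; [exact Ha|].
      now rewrite Hi, <- Nat.iter_add, Nat.sub_add, Hpp by lia.
    - intros j Hj1 Hj2. rewrite Hi, <- Nat.iter_add.
      split; intros E; [change a with (Nat.iter 0 f a) in E at 2|]; apply Heq in E; lia. }
  split; [exists i; auto|split; [exists (p - i); split; [lia|auto]|]].
  intros Hcg. destruct (cycle_of_periodic g i a b comp_swap_injective Hi0 Hgi Hcg) as [k [Hk Hbk]].
  rewrite (iter_comp_swap_agree a (i - 1)) in Hbk; [|intros j ? ?; apply Hbefore; lia|lia].
  destruct k as [|k]; [now destruct Hab|]. apply (Hbefore (S k)); auto; lia.
Qed.

Lemma swap_splits_off d :
  ~ periodic f a -> b = Nat.iter d f a -> periodic g a /\ ~ periodic g b.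
Proof.
  pose proof Hs as [Hab [Ha [Hb _]]]. intros Hpa Hd.
  assert (Heq : forall m n, Nat.iter m f a = Nat.iter n f a -> m = n)
    by (intros m n; apply (iter_eq_aperiodic f a m n Hf Hpa)).
  assert (Hd0 : 1 <= d) by (destruct d; [now destruct Hab|lia]).
  assert (Hgb : forall k, Nat.iter k g b = Nat.iter k f b).
  { apply iter_comp_swap_avoid. intros j Hj. rewrite Hd, <- Nat.iter_add.
    split; intros E; [change a with (Nat.iter 0 f a) in E at 2|]; apply Heq in E; lia. }
  split.
  - exists d. split; auto. rewrite (iter_comp_swap_hit a d), <- Hd; auto.
    intros j Hj1 Hj2. rewrite Hd.
    split; intros E; [change a with (Nat.iter 0 f a) in E at 2|]; apply Heq in E; lia.
  - intros [m [Hm E]]. rewrite Hgb, Hd, <- Nat.iter_add in E. apply Heq in E. lia.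
Qed.

End Dynamics.
End Swap.

Section FiniteCyclesThrough.
Context {T : Type}.
Implicit Types (f g h : T -> T) (a b x y : T).

Definition nfinite_cycles_through g a b : nat :=
  iverson (periodic g a) + iverson (periodic g b /\ ~ cycle_of g a b).

Lemma nfinite_cycles_through_aperiodic g a b :
  ~ periodic g a -> ~ periodic g b -> nfinite_cycles_through g a b = 0.
Proof. intros Ha Hb. unfold nfinite_cycles_through. rewrite !iverson_false; tauto. Qed.

Lemma nfinite_cycles_through_one g a b :
  periodic g a -> ~ periodic g b -> nfinite_cycles_through g a b = 1.
Proof.
  intros Ha Hb. unfold nfinite_cycles_through. rewrite iverson_true, iverson_false; tauto.
Qed.

Lemma nfinite_cycles_through_sym g a b :
  injective g -> nfinite_cycles_through g a b = nfinite_cycles_through g b a.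
Proof.
  intros Hg. unfold nfinite_cycles_through.
  destruct (classic (cycle_of g a b)) as [Hab|Hab].
  - assert (Hper : periodic g a <-> periodic g b)
      by (split; intros H; eapply periodic_cycle_of; eauto using cycle_of_sym).
    rewrite !(iverson_false (_ /\ _)) by (intros [_ H]; auto using cycle_of_sym).
    now rewrite (iverson_iff _ _ Hper).
  - assert (Hba : ~ cycle_of g b a) by auto using cycle_of_sym.
    rewrite (iverson_iff (_ /\ ~ cycle_of g a b) (periodic g b)),
            (iverson_iff (_ /\ ~ cycle_of g b a) (periodic g a)) by tauto.
    lia.
Qed.

Lemma cycle_of_iter_cases g x y :
  injective g -> cycle_of g x y -> exists d, y = Nat.iter d g x \/ x = Nat.iter d g y.
Proof.
  intros Hg [i [j E]]. destruct (Nat.le_gt_cases j i) as [Hji|Hji].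
  - exists (i - j). left. apply (iter_inj g j); auto.
    now rewrite <- Nat.iter_add, Nat.add_comm, Nat.sub_add.
  - exists (j - i). right. apply (iter_inj g i); auto.
    rewrite <- Nat.iter_add, Nat.add_comm, Nat.sub_add; auto; lia.
Qed.

Lemma aperiodic_cycle_kind f x :
  injective f -> ~ periodic f x ->
  open_cycle f (cycle_of f x) \/ forward_cycle f (cycle_of f x).
Proof.
  intros Hf Hx. pose proof (is_cycle_cycle_of f x) as Hc.
  assert (Hinf : infinite_set (cycle_of f x))
    by (intros n Hn; exact (Hx (periodic_of_has_size f x n Hf Hn))).
  destruct (classic (not_in_image f (cycle_of f x))); [right|left]; (split; [|split]); auto.
Qed.

Lemma aperiodic_same_cycle f a b :
  injective f -> (exists m n : nat, m + n = 1 /\ Copen f m /\ Cfwd f n) ->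
  ~ periodic f a -> ~ periodic f b -> cycle_of f a b.
Proof.
  intros Hf [m [n [Hmn [Ho Hw]]]] Ha Hb.
  cut (same_set (cycle_of f a) (cycle_of f b)); [intros E; apply E, cycle_of_refl|].
  destruct m as [|[|]], n as [|[|]]; try lia;
    destruct (aperiodic_cycle_kind f a Hf Ha) as [Ka|Ka],
             (aperiodic_cycle_kind f b Hf Hb) as [Kb|Kb];
    first [solve [exfalso; eapply family_card_0; eauto]
          | exact (family_card_1 _ _ _ Ho Ka Kb)
          | exact (family_card_1 _ _ _ Hw Ka Kb)].
Qed.

Lemma swap_changes_nfinite_cycles_through f h a b :
  injective f -> swaps h a b ->
  (exists m n : nat, m + n = 1 /\ Copen f m /\ Cfwd f n) ->
  nfinite_cycles_through f a b = S (nfinite_cycles_through (comp_lr f h) a b) \/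
  nfinite_cycles_through (comp_lr f h) a b = S (nfinite_cycles_through f a b).
Proof.
  intros Hf Hs Hoc. pose proof (comp_swap_injective f h a b Hf Hs) as Hg.
  destruct (classic (periodic f a)) as [Ha|Ha], (classic (periodic f b)) as [Hb|Hb].
  - unfold nfinite_cycles_through. destruct (classic (cycle_of f a b)) as [C|C].
    + destruct (swap_splits f h a b Hf Hs Ha C) as [Ga [Gb Gab]].
      right. rewrite !iverson_true, iverson_false by tauto. reflexivity.
    + destruct (swap_merges f h a b Hf Hs Ha Hb C) as [Ga Gab].
      left. rewrite !iverson_true, iverson_false by tauto. reflexivity.
  - destruct (swap_absorbs f h a b Hf Hs Ha Hb) as [Ga Gb]. left.
    now rewrite nfinite_cycles_through_one, nfinite_cycles_through_aperiodic.
  - destruct (swap_absorbs f h b a Hf (swaps_sym h a b Hs) Hb Ha) as [Gb Ga]. left.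
    rewrite nfinite_cycles_through_sym, (nfinite_cycles_through_sym (comp_lr f h)) by auto.
    now rewrite nfinite_cycles_through_one, nfinite_cycles_through_aperiodic.
  - right. rewrite (nfinite_cycles_through_aperiodic f) by auto.
    destruct (cycle_of_iter_cases f a b Hf (aperiodic_same_cycle f a b Hf Hoc Ha Hb))
      as [d [Hd|Hd]].
    + destruct (swap_splits_off f h a b Hf Hs d Ha Hd) as [Ga Gb].
      now apply nfinite_cycles_through_one.
    + destruct (swap_splits_off f h b a Hf (swaps_sym h a b Hs) d Hb Hd) as [Gb Ga].
      rewrite nfinite_cycles_through_sym by auto. now apply nfinite_cycles_through_one.
Qed.

End FiniteCyclesThrough.

Section Conjugation.
Context {T : Type}.
Variables (g k h : T -> T).
Hypothesis Hh : forall x, h (h x) = x.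
Hypothesis Hk : forall x, k x = h (g (h x)).

Lemma iter_conj m x : h (Nat.iter m k x) = Nat.iter m g (h x).
Proof. apply Nat.iter_swap_gen. intros y. now rewrite Hk, Hh. Qed.

Lemma cycle_of_conj x y : cycle_of k x y <-> cycle_of g (h x) (h y).
Proof.
  unfold cycle_of. setoid_rewrite <- iter_conj. split; intros [i [j E]]; exists i, j.
  - now rewrite E.
  - now rewrite <- (Hh (Nat.iter i k x)), E, Hh.
Qed.

Lemma is_cycle_conj A : is_cycle g A -> is_cycle k (fun x => A (h x)).
Proof.
  rewrite !is_cycle_iff. intros [x HA]. exists (h x). intros y.
  now rewrite cycle_of_conj, Hh, (HA (h y)).
Qed.

Lemma has_size_conj A n : has_size A n -> has_size (fun x => A (h x)) n.
Proof.
  intros [l [Hl [<- Hm]]]. exists (map h l). split; [|split; [apply length_map|]].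
  - apply NoDup_map_NoDup_ForallPairs; auto.
    intros x y _ _ E. now rewrite <- (Hh x), E, Hh.
  - intros y. rewrite Hm, in_map_iff. split.
    + intros Hy. exists (h y). auto.
    + intros [z [<- Hz]]. now rewrite Hh.
Qed.

End Conjugation.

Lemma Cn_conj {T : Type} (g k h : T -> T) n c :
  (forall x, h (h x) = x) -> (forall x, k x = h (g (h x))) -> Cn g n c -> Cn k n c.
Proof.
  intros Hh Hk. apply family_card_preimage with (h := h); auto.
  - intros A [HA Hn]. split; [now apply (is_cycle_conj g)|now apply has_size_conj].
  - intros B [HB Hn]. split; [|now apply has_size_conj].
    apply (is_cycle_conj k g); auto. intros x. now rewrite Hk, !Hh.
Qed.

Lemma Cn_swap_conj {T : Type} (f h : T -> T) a b n c :
  swaps h a b -> Cn (comp_lr f h) n c -> Cn (comp_lr h f) n c.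
Proof.
  intros Hs. apply (Cn_conj _ _ h); [intros x; exact (swaps_involutive h a b x Hs)|].
  intros x. unfold comp_lr. now rewrite (swaps_involutive h a b (f (h x)) Hs).
Qed.

Fixpoint zsum (c : nat -> nat) (N : nat) : Z :=
  match N with
  | O => 0%Z
  | S m => (zsum c m + Z.of_nat (c (S m)))%Z
  end.

Lemma zdiff_sum_sub c d N : zdiff_sum c d N = (zsum c N - zsum d N)%Z.
Proof. induction N as [|N IH]; simpl; [reflexivity|]. rewrite IH. lia. Qed.

Lemma zdiff_sum_shift c r s N :
  (forall n, 1 <= n -> r n <= c n) ->
  zdiff_sum c (fun n => c n - r n + s n) N = zdiff_sum r s N.
Proof. intros H. induction N as [|N IH]; simpl; [reflexivity|]. specialize (H (S N)). lia. Qed.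

Lemma zsum_ext c d N : (forall n, 1 <= n -> n <= N -> c n = d n) -> zsum c N = zsum d N.
Proof. induction N as [|N IH]; intros H; simpl; [reflexivity|]. rewrite IH, H; auto; lia. Qed.

Lemma zsum_add c d N : zsum (fun n => c n + d n) N = (zsum c N + zsum d N)%Z.
Proof. induction N as [|N IH]; simpl; [reflexivity|]. rewrite IH. lia. Qed.

Lemma zsum_zero N : zsum (fun _ => 0) N = 0%Z.
Proof. induction N as [|N IH]; simpl; [reflexivity|]. rewrite IH. reflexivity. Qed.

Lemma zsum_iverson_eq s N : 1 <= s <= N -> zsum (fun n => iverson (n = s)) N = 1%Z.
Proof.
  induction N as [|N IH]; intros Hs; simpl; [lia|].
  destruct (Nat.eq_dec s (S N)) as [->|Hne].
  - rewrite iverson_true, (zsum_ext _ (fun _ => 0)), zsum_zero; auto.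
    intros n _ Hn. apply iverson_false. lia.
  - rewrite iverson_false, IH; lia.
Qed.

Lemma zsum_iverson_size {T : Type} (C : T -> Prop) (Q : Prop) N :
  (forall s, has_size C s -> 1 <= s <= N) ->
  zsum (fun n => iverson (has_size C n /\ Q)) N =
  Z.of_nat (iverson ((exists s, has_size C s) /\ Q)).
Proof.
  intros HN. destruct (classic ((exists s, has_size C s) /\ Q)) as [[[s Hs] HQ]|Hn].
  - rewrite iverson_true by eauto. rewrite (zsum_ext _ (fun n => iverson (n = s))).
    + now apply zsum_iverson_eq, HN.
    + intros n _ _. apply iverson_iff. split; [intros [Hn _]; exact (has_size_unique C n s Hn Hs)|].
      intros ->. auto.
  - rewrite iverson_false by exact Hn. rewrite (zsum_ext _ (fun _ => 0)), zsum_zero; auto.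
    intros n _ _. apply iverson_false. intros [Hs HQ]. eauto.
Qed.

Section Sums.
Context {T : Type}.
Implicit Types (f g : T -> T) (a b : T).

Definition sizes_below g a b N : Prop :=
  forall s, has_size (cycle_of g a) s \/ has_size (cycle_of g b) s -> s <= N.

Lemma sizes_below_exists g a b : exists N, sizes_below g a b N.
Proof.
  assert (Hbound : forall x, exists M, forall s, has_size (cycle_of g x) s -> s <= M).
  { intros x. destruct (classic (exists s, has_size (cycle_of g x) s)) as [[s Hs]|Hn].
    - exists s. intros t Ht. now rewrite (has_size_unique _ _ _ Ht Hs).
    - exists 0. intros t Ht. exfalso. eauto. }
  destruct (Hbound a) as [Ma Ha], (Hbound b) as [Mb Hb].
  exists (Ma + Mb). intros s [Hs|Hs]; [specialize (Ha s Hs)|specialize (Hb s Hs)]; lia.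
Qed.

Lemma sizes_below_common f g a b : exists N, sizes_below f a b N /\ sizes_below g a b N.
Proof.
  destruct (sizes_below_exists f a b) as [Nf HNf], (sizes_below_exists g a b) as [Ng HNg].
  exists (Nf + Ng). split; intros s Hs; [specialize (HNf s Hs)|specialize (HNg s Hs)]; lia.
Qed.

Lemma ncycles_through_beyond g a b N n :
  sizes_below g a b N -> N < n -> ncycles_through g a b n = 0.
Proof.
  intros HN Hn.
  assert (Ha : ~ has_size (cycle_of g a) n) by (intros Hs; enough (n <= N) by lia; apply HN; auto).
  assert (Hb : ~ has_size (cycle_of g b) n) by (intros Hs; enough (n <= N) by lia; apply HN; auto).
  unfold ncycles_through. rewrite !iverson_false; tauto.
Qed.

Lemma zsum_ncycles_through g a b N :
  injective g -> sizes_below g a b N ->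
  zsum (ncycles_through g a b) N = Z.of_nat (nfinite_cycles_through g a b).
Proof.
  intros Hg HN. unfold ncycles_through, nfinite_cycles_through.
  rewrite (zsum_ext _ (fun n => iverson (has_size (cycle_of g a) n /\ True) +
                                iverson (has_size (cycle_of g b) n /\ ~ cycle_of g a b)))
    by (intros n _ _; f_equal; apply iverson_iff; tauto).
  rewrite zsum_add, !zsum_iverson_size.
  - rewrite (iverson_iff (_ /\ True) (periodic g a)),
            (iverson_iff (_ /\ ~ _) (periodic g b /\ ~ cycle_of g a b));
      [lia|rewrite finite_cycle_of_iff by exact Hg; tauto..].
  - intros s Hs. split; [exact (has_size_pos _ _ _ (cycle_of_refl g b) Hs)|auto].
  - intros s Hs. split; [exact (has_size_pos _ _ _ (cycle_of_refl g a) Hs)|auto].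
Qed.

Lemma Cn_total f : (forall n, 1 <= n -> exists k, Cn f n k) -> forall n, exists k, Cn f n k.
Proof.
  intros H [|n]; [|apply H; lia]. exists 0. apply family_card_empty.
  intros A [[[x Hx] _] Hs]. pose proof (has_size_pos A x 0 Hx Hs). lia.
Qed.

End Sums.

Theorem mainTheorem16 (T : Type) (HT : countably_infinite T)
  (f h : T -> T) (Hf : injective f)
  (Hoc : exists a b : nat, a + b = 1 /\ Copen f a /\ Cfwd f b)
  (Hfin : forall n : nat, 1 <= n -> exists k : nat, Cn f n k)
  (Hh : transposition h) :
  exists (cf cfh chf : nat -> nat) (N : nat),
    (forall n, 1 <= n -> Cn f n (cf n) /\ Cn (comp_lr f h) n (cfh n)
                         /\ Cn (comp_lr h f) n (chf n)) /\
    (forall n, N < n -> cf n = cfh n /\ cf n = chf n) /\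
    zdiff_sum cf cfh N = zdiff_sum cf chf N /\
    (zdiff_sum cf cfh N = 1%Z \/ zdiff_sum cf cfh N = (-1)%Z).
Proof.
  destruct Hh as [a [b Hs]]. change (swaps h a b) in Hs.
  set (g := comp_lr f h).
  pose proof (comp_swap_injective f h a b Hf Hs) as Hg.
  destruct (choice (Cn f) (Cn_total f Hfin)) as [cf Hcf].
  set (cg := fun n => cf n - ncycles_through f a b n + ncycles_through g a b n).
  assert (Hcg : forall n, ncycles_through f a b n <= cf n /\ Cn g n (cg n))
    by (intros n; exact (Cn_comp_swap f h a b n (cf n) Hs (Hcf n))).
  destruct (sizes_below_common f g a b) as [N [HNf HNg]].
  exists cf, cg, cg, N. split; [|split; [|split]].
  - intros n _. split; [|split]; [auto|apply Hcg|].
    exact (Cn_swap_conj f h a b n _ Hs (proj2 (Hcg n))).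
  - intros n Hn. unfold cg.
    rewrite (ncycles_through_beyond f a b N), (ncycles_through_beyond g a b N);
      auto; lia.
  - reflexivity.
  - unfold cg. rewrite zdiff_sum_shift, zdiff_sum_sub by (intros n _; apply Hcg).
    rewrite !(zsum_ncycles_through _ a b N) by auto.
    destruct (swap_changes_nfinite_cycles_through f h a b Hf Hs Hoc) as [E|E];
      fold g in E; lia.
Qed.
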